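(* Let $M=\{D_1,\dots,D_m\}$, $m\ge2$, be a 2-disk system consisting of pairwise distinct disks. Then $\bigcap_{k=1}^m D_k\neq\emptyset$ if and only if there exist indices $i\ne j$ with $D_i\cap D_j\ne\emptyset$ such that the point $d_{ij}$ satisfies $d_{ij}\in D_k$ for all $1\le k\le m$.
   Context: A 2-disk system is a finite collection of closed disks $D_i=D(c_i;r_i)=\{x\in\mathbb R^2:\|x-c_i\|\le r_i\}$ with $r_i>0$; $\partial D_i$ denotes the boundary circle $\{x:\|x-c_i\|=r_i\}$. Definition of $d_{ij}$: for $i\neq j$ with $D_i\cap D_j\ne\emptyset$, write $c_j-c_i=(a,b)$ and $\mathbf n_{ij}=(-b,a)$. (1) If $\partial D_i\cap\partial D_j\ne\emptyset$, $d_{ij}$ is the unique point of $\partial D_i\cap\partial D_j$ with $\langle d_{ij}-c_i,\mathbf n_{ij}\rangle\ge0$. (2) If $\partial D_i\cap\partial D_j=\emptyset$ (so $r_i\ne r_j$ and one disk lies in the interior of the other), let $\lambda=\|c_i-c_j\|/|r_i-r_j|$; then $d_{ij}$ is the unique point of $\partial D(c_i;\lambda r_i)\cap\partial D(c_j;\lambda r_j)$ (when $c_i=c_j$ this means $d_{ij}=c_i$). *)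

From Stdlib Require Import Reals.
Open Scope R_scope.

Definition pt : Type := (R * R)%type.

Definition psub (p q : pt) : pt := (fst p - fst q, snd p - snd q).
Definition inner (p q : pt) : R := fst p * fst q + snd p * snd q.
Definition norm (p : pt) : R := sqrt (fst p ^ 2 + snd p ^ 2).

Record disk : Type := mkDisk { center : pt ; radius : R }.

Definition in_disk (x : pt) (D : disk) : Prop :=
  norm (psub x (center D)) <= radius D.

Definition on_circle (x c : pt) (r : R) : Prop := norm (psub x c) = r.

Definition boundaries_meet (Di Dj : disk) : Prop :=
  exists x, on_circle x (center Di) (radius Di) /\ on_circle x (center Dj) (radius Dj).

(* d is the point d_ij (for D_i, D_j with nonempty intersection), following the
   paper's definition: the point is characterised by the defining property
   (which determines it uniquely for distinct disks). *)
Definition is_dij (Di Dj : disk) (d : pt) : Prop :=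
  let ci := center Di in let cj := center Dj in
  let ri := radius Di in let rj := radius Dj in
  let ab := psub cj ci in
  let n := (- snd ab, fst ab) in
  (boundaries_meet Di Dj /\
     on_circle d ci ri /\ on_circle d cj rj /\ 0 <= inner (psub d ci) n)
  \/
  (~ boundaries_meet Di Dj /\
     let lam := norm (psub ci cj) / Rabs (ri - rj) in
     on_circle d ci (lam * ri) /\ on_circle d cj (lam * rj)).

From Stdlib Require Import Reals Lra Psatz Classical Lia.
Open Scope R_scope.

(* Starting from a common point,
   slide it horizontally until it first reaches a boundary circle dD_k while
   staying in all disks (intermediate value theorem for the minimum of the
   finitely many functions r_l^2 - |x - c_l|^2). Then walk along dD_k. If the
   whole circle stays in every disk, D_k lies in every disk, and d_kj lies in
   D_k for any j: it is a point of dD_k, or, for nested disks with disjoint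
   boundaries, a point at distance lambda r_k <= r_k from c_k. Otherwise the walk
   first leaves some D_l at a point of dD_k and dD_l lying in all disks, and
   such a point is d_kl or d_lk. *)

Fixpoint min_upto (F : nat -> R -> R) (n : nat) (x : R) : R :=
  match n with
  | O => F O x
  | S n' => Rmin (min_upto F n' x) (F n x)
  end.

Lemma min_upto_le F n x l : (l <= n)%nat -> min_upto F n x <= F l x.
Proof.
  induction n as [|n IH]; intros Hl; simpl.
  - replace l with 0%nat by lia; lra.
  - destruct (Nat.eq_dec l (S n)) as [->|Hne]; [apply Rmin_r|].
    eapply Rle_trans; [apply Rmin_l | apply IH; lia].
Qed.

Lemma min_upto_attained F n x : exists l, (l <= n)%nat /\ min_upto F n x = F l x.
Proof.
  induction n as [|n [l [Hl Hmin]]]; simpl.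
  - exists 0%nat; split; [lia | reflexivity].
  - apply (Rmin_case _ _ (fun y => exists l, (l <= S n)%nat /\ y = F l x)).
    + exists l; split; [lia | assumption].
    + exists (S n); split; [lia | reflexivity].
Qed.

Lemma continuity_Rmin f g :
  continuity f -> continuity g -> continuity (fun x => Rmin (f x) (g x)).
Proof.
  intros Hf Hg x.
  assert (Habs : continuity (fun x => Rabs (f x - g x))).
  { apply (continuity_comp (fun x => f x - g x) Rabs);
      [apply continuity_minus; assumption | apply Rcontinuity_abs]. }
  apply (continuity_pt_locally_ext (fun x => (f x + g x - Rabs (f x - g x)) / 2) _ 1);
    [lra | intros y _; unfold Rmin, Rabs; destruct Rle_dec, Rcase_abs; lra |].
  reg.
Qed.

Lemma continuity_min_upto F n :
  (forall l, continuity (F l)) -> continuity (min_upto F n).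
Proof.
  intros HF; induction n as [|n IH]; [apply HF | apply continuity_Rmin; auto].
Qed.

Lemma exists_root_of_sign_change f a b :
  continuity f -> 0 <= f a -> f b <= 0 -> exists z, f z = 0.
Proof.
  intros Hf Ha Hb.
  destruct (Rle_or_lt a b) as [Hab | Hba].
  - destruct (IVT_cor f a b Hf Hab) as [z [_ Hz]]; [nra | eauto].
  - destruct (IVT_cor f b a Hf (Rlt_le _ _ Hba)) as [z [_ Hz]]; [nra | eauto].
Qed.

Lemma finite_family_touches_zero (F : nat -> R -> R) m a b :
  (forall l, continuity (F l)) ->
  (forall l, (l < m)%nat -> 0 <= F l a) ->
  (exists l, (l < m)%nat /\ F l b < 0) ->
  exists s, (forall l, (l < m)%nat -> 0 <= F l s) /\
            exists l, (l < m)%nat /\ F l s = 0.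
Proof.
  intros HF Ha [l0 [Hl0 Hb]].
  set (n := pred m).
  assert (Hidx : forall l, (l < m)%nat <-> (l <= n)%nat) by (intros; unfold n; lia).
  destruct (exists_root_of_sign_change (min_upto F n) a b) as [s Hs].
  - apply continuity_min_upto, HF.
  - destruct (min_upto_attained F n a) as [l [Hl ->]]. apply Ha, Hidx, Hl.
  - apply Rlt_le, Rle_lt_trans with (F l0 b); [apply min_upto_le, Hidx |]; assumption.
  - exists s. split.
    + intros l Hl. rewrite <- Hs. apply min_upto_le, Hidx, Hl.
    + destruct (min_upto_attained F n s) as [l [Hl Hsl]].
      exists l. split; [apply Hidx, Hl | congruence].
Qed.

Definition dist2 (p q : pt) : R := (fst p - fst q) ^ 2 + (snd p - snd q) ^ 2.

Lemma norm_psub p q : norm (psub p q) = sqrt (dist2 p q).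
Proof. reflexivity. Qed.

Lemma dist2_ge0 p q : 0 <= dist2 p q.
Proof. unfold dist2; pose proof (pow2_ge_0 (fst p - fst q)); pose proof (pow2_ge_0 (snd p - snd q)); lra. Qed.

Lemma norm_psub_le_iff p q r :
  0 <= r -> norm (psub p q) <= r <-> dist2 p q <= r ^ 2.
Proof.
  intros Hr. rewrite norm_psub. pose proof (dist2_ge0 p q) as Hd. split; intros H.
  - rewrite <- (pow2_sqrt (dist2 p q)) by assumption.
    apply pow_incr; split; [apply sqrt_pos | assumption].
  - rewrite <- (sqrt_pow2 r Hr). apply sqrt_le_1_alt, H.
Qed.

Lemma norm_psub_eq_iff p q r :
  0 <= r -> norm (psub p q) = r <-> dist2 p q = r ^ 2.
Proof.
  intros Hr. rewrite norm_psub. pose proof (dist2_ge0 p q) as Hd. split; intros H.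
  - rewrite <- H, pow2_sqrt; auto.
  - rewrite H, sqrt_pow2; auto.
Qed.

Lemma in_disk_of_on_circle x Dk :
  on_circle x (center Dk) (radius Dk) -> in_disk x Dk.
Proof. unfold in_disk. intros ->. apply Rle_refl. Qed.

Lemma norm_psub_triangle x y z :
  norm (psub x z) <= norm (psub x y) + norm (psub y z).
Proof.
  rewrite !norm_psub.
  assert (Hcs : (fst x - fst y) * (fst y - fst z) + (snd x - snd y) * (snd y - snd z)
                <= sqrt (dist2 x y) * sqrt (dist2 y z))
    by (unfold dist2; rewrite <- !Rsqr_pow2; apply sqrt_cauchy).
  set (a := sqrt (dist2 x y)) in *. set (b := sqrt (dist2 y z)) in *.
  assert (Ha : 0 <= a) by apply sqrt_pos. assert (Hb : 0 <= b) by apply sqrt_pos.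
  rewrite <- (sqrt_pow2 (a + b)) by lra. apply sqrt_le_1_alt.
  assert (Ha2 : a ^ 2 = dist2 x y) by apply pow2_sqrt, dist2_ge0.
  assert (Hb2 : b ^ 2 = dist2 y z) by apply pow2_sqrt, dist2_ge0.
  unfold dist2 in *. nra.
Qed.

Lemma unit_direction p :
  exists e : pt, fst e ^ 2 + snd e ^ 2 = 1 /\
    fst p = norm p * fst e /\ snd p = norm p * snd e.
Proof.
  assert (Hn : norm p ^ 2 = fst p ^ 2 + snd p ^ 2)
    by (apply pow2_sqrt; pose proof (pow2_ge_0 (fst p)); pose proof (pow2_ge_0 (snd p)); lra).
  destruct (Req_dec (norm p) 0) as [H0 | H0].
  - exists (1, 0). cbn [fst snd]. rewrite H0 in *. repeat split; nra.
  - exists (fst p / norm p, snd p / norm p). cbn [fst snd]. repeat split; [| field; lra ..].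
    replace ((fst p / norm p) ^ 2 + (snd p / norm p) ^ 2) with ((fst p ^ 2 + snd p ^ 2) / norm p ^ 2)
      by (field; lra).
    rewrite <- Hn. field. lra.
Qed.

Lemma unit_vector_angle a b : a ^ 2 + b ^ 2 = 1 -> exists t, cos t = a /\ sin t = b.
Proof.
  intros H.
  assert (Ha : -1 <= a <= 1) by nra.
  assert (Hb : 1 - a² = b ^ 2) by (rewrite Rsqr_pow2; lra).
  destruct (Rle_or_lt 0 b) as [Hb0 | Hb0].
  - exists (acos a). rewrite cos_acos, sin_acos, Hb, sqrt_pow2 by lra. auto.
  - exists (- acos a). rewrite cos_neg, sin_neg, cos_acos, sin_acos, Hb by lra.
    replace (b ^ 2) with ((- b) ^ 2) by ring. rewrite sqrt_pow2 by lra. split; [reflexivity | ring].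
Qed.

Definition circle_pt (c : pt) (r t : R) : pt := (fst c + r * cos t, snd c + r * sin t).

Lemma circle_pt_on_circle c r t : 0 <= r -> on_circle (circle_pt c r t) c r.
Proof.
  intros Hr. apply norm_psub_eq_iff; [assumption |].
  unfold dist2, circle_pt; cbn [fst snd].
  replace ((fst c + r * cos t - fst c) ^ 2 + (snd c + r * sin t - snd c) ^ 2)
    with (r ^ 2 * ((sin t)² + (cos t)²)) by (unfold Rsqr; ring).
  rewrite sin2_cos2. ring.
Qed.

Lemma on_circle_circle_pt x c r : on_circle x c r -> exists t, x = circle_pt c r t.
Proof.
  intros Hx. destruct (unit_direction (psub x c)) as [e [He [H1 H2]]].
  destruct (unit_vector_angle _ _ He) as [t [Hc Hs]].
  exists t. unfold on_circle in Hx. rewrite Hx in H1, H2.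
  destruct x as [x1 x2]. unfold circle_pt, psub in *. cbn [fst snd] in *.
  rewrite Hc, Hs. f_equal; lra.
Qed.

Lemma dist_add_radius_le_of_circle_sub (Di Dj : disk) :
  0 <= radius Di ->
  (forall y, on_circle y (center Di) (radius Di) -> in_disk y Dj) ->
  norm (psub (center Di) (center Dj)) + radius Di <= radius Dj.
Proof.
  intros Hri Hsub.
  destruct (unit_direction (psub (center Di) (center Dj))) as [e [He [H1 H2]]].
  set (dl := norm (psub (center Di) (center Dj))) in *.
  assert (Hdl : 0 <= dl) by apply sqrt_pos.
  set (y := (fst (center Di) + radius Di * fst e, snd (center Di) + radius Di * snd e)).
  assert (Hy : on_circle y (center Di) (radius Di)).
  { apply norm_psub_eq_iff; [assumption |]. unfold dist2, y; cbn [fst snd].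
    replace ((fst (center Di) + radius Di * fst e - fst (center Di)) ^ 2 +
             (snd (center Di) + radius Di * snd e - snd (center Di)) ^ 2)
      with (radius Di ^ 2 * (fst e ^ 2 + snd e ^ 2)) by ring.
    rewrite He. ring. }
  assert (Hfar : norm (psub y (center Dj)) = dl + radius Di).
  { apply norm_psub_eq_iff; [lra |]. unfold dist2, y, psub in *; cbn [fst snd] in *.
    replace (fst (center Di) + radius Di * fst e - fst (center Dj)) with ((dl + radius Di) * fst e)
      by lra.
    replace (snd (center Di) + radius Di * snd e - snd (center Dj)) with ((dl + radius Di) * snd e)
      by lra.
    replace (((dl + radius Di) * fst e) ^ 2 + ((dl + radius Di) * snd e) ^ 2)
      with ((dl + radius Di) ^ 2 * (fst e ^ 2 + snd e ^ 2)) by ring.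
    rewrite He. ring. }
  specialize (Hsub y Hy). unfold in_disk in Hsub. lra.
Qed.

Lemma disk_sub_of_dist_add_radius_le (Di Dj : disk) :
  norm (psub (center Di) (center Dj)) + radius Di <= radius Dj ->
  forall y, in_disk y Di -> in_disk y Dj.
Proof.
  intros H y Hy. unfold in_disk in *.
  pose proof (norm_psub_triangle y (center Di) (center Dj)). lra.
Qed.

Lemma disk_sub_of_circle_sub (Di Dj : disk) :
  0 <= radius Di ->
  (forall y, on_circle y (center Di) (radius Di) -> in_disk y Dj) ->
  forall y, in_disk y Di -> in_disk y Dj.
Proof.
  intros Hri Hsub.
  apply disk_sub_of_dist_add_radius_le, dist_add_radius_le_of_circle_sub; assumption.
Qed.

Lemma is_dij_of_on_circles (Di Dj : disk) v :
  on_circle v (center Di) (radius Di) -> on_circle v (center Dj) (radius Dj) ->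
  is_dij Di Dj v \/ is_dij Dj Di v.
Proof.
  intros Hi Hj.
  assert (Hmeet : forall D1 D2, on_circle v (center D1) (radius D1) ->
            on_circle v (center D2) (radius D2) -> boundaries_meet D1 D2)
    by (intros D1 D2 H1 H2; exists v; split; assumption).
  unfold is_dij, inner, psub; cbn [fst snd].
  set (ci := center Di) in *. set (cj := center Dj) in *.
  destruct (Rle_or_lt 0 ((fst v - fst ci) * - (snd cj - snd ci) +
                         (snd v - snd ci) * (fst cj - fst ci))) as [Hor | Hor].
  - left. left. repeat split; auto.
  - right. left. repeat split; auto. nra.
Qed.

Lemma exists_dij_of_boundaries_meet (Di Dj : disk) :
  boundaries_meet Di Dj ->
  exists d, is_dij Di Dj d /\ on_circle d (center Di) (radius Di).
Proof.
  intros Hm. pose proof Hm as [x [Hxi Hxj]].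
  unfold is_dij; cbv zeta.
  set (ci := center Di) in *. set (cj := center Dj) in *.
  set (n := (- snd (psub cj ci), fst (psub cj ci))).
  set (A := inner (psub x ci) n).
  destruct (Rle_or_lt 0 A) as [HA | HA].
  - exists x. split; [left; repeat split |]; assumption.
  - set (N := inner n n).
    assert (HN : 0 < N).
    { unfold N, A, inner, n, psub in *; cbn [fst snd] in *.
      destruct (Req_dec (fst cj - fst ci) 0), (Req_dec (snd cj - snd ci) 0); nra. }
    (* the reflection of x in the line through the two centers *)
    set (d := (fst x - 2 * A / N * fst n, snd x - 2 * A / N * snd n)).
    assert (Hdist : forall c, inner (psub c ci) n = 0 -> dist2 d c = dist2 x c).
    { intros c Hc.
      assert (Hxc : inner (psub x c) n = A).
      { transitivity (A - inner (psub c ci) n); [| rewrite Hc; ring].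
        unfold A, inner, psub; cbn [fst snd]; ring. }
      replace (dist2 d c) with
        (dist2 x c - 2 * (2 * A / N) * inner (psub x c) n + (2 * A / N) ^ 2 * N)
        by (unfold d, dist2, N, inner, psub; cbn [fst snd]; ring).
      rewrite Hxc. field. lra. }
    assert (Hci : inner (psub ci ci) n = 0) by (unfold inner, psub; cbn [fst snd]; ring).
    assert (Hcj : inner (psub cj ci) n = 0) by (unfold inner, n; cbn [fst snd]; ring).
    assert (Hdi : on_circle d ci (radius Di))
      by (unfold on_circle; rewrite norm_psub, Hdist; assumption).
    assert (Hdj : on_circle d cj (radius Dj))
      by (unfold on_circle; rewrite norm_psub, Hdist; assumption).
    exists d. split; [left |].
    + repeat split; try assumption.
      replace (inner (psub d ci) n) with (A - 2 * A / N * N)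
        by (unfold d, A, N, inner, psub; cbn [fst snd]; ring).
      field_simplify; lra.
    + assumption.
Qed.

Lemma exists_dij_of_nested (Di Dj : disk) :
  0 <= radius Di -> Di <> Dj -> ~ boundaries_meet Di Dj ->
  (forall y, in_disk y Di -> in_disk y Dj) ->
  exists d, is_dij Di Dj d /\ in_disk d Di.
Proof.
  intros Hri Hne Hm Hsub.
  destruct Di as [ci ri], Dj as [cj rj]; unfold is_dij; cbn [center radius] in *; cbv zeta.
  set (dl := norm (psub ci cj)).
  assert (Hdl : 0 <= dl) by apply sqrt_pos.
  assert (Hdl2 : dist2 ci cj = dl ^ 2) by (apply norm_psub_eq_iff; auto).
  assert (Hle : dl + ri <= rj).
  { apply (dist_add_radius_le_of_circle_sub (mkDisk ci ri) (mkDisk cj rj)); [assumption |].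
    intros y Hy. apply Hsub, in_disk_of_on_circle, Hy. }
  assert (Hlt : ri < rj).
  { destruct (Req_dec ri rj) as [<- | ?]; [| lra].
    exfalso. apply Hne. f_equal.
    assert (Hd0 : dist2 ci cj = 0) by (rewrite Hdl2; replace dl with 0 by lra; ring).
    unfold dist2 in Hd0.
    pose proof (pow2_ge_0 (fst ci - fst cj)). pose proof (pow2_ge_0 (snd ci - snd cj)).
    assert (fst ci - fst cj = 0) by (apply Rsqr_0_uniq; rewrite Rsqr_pow2; lra).
    assert (snd ci - snd cj = 0) by (apply Rsqr_0_uniq; rewrite Rsqr_pow2; lra).
    destruct ci, cj; cbn [fst snd] in *. f_equal; lra. }
  set (lam := dl / Rabs (ri - rj)).
  assert (Hlam : lam = dl / (rj - ri))
    by (unfold lam; rewrite Rabs_left by lra; f_equal; ring).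
  assert (Hlam01 : 0 <= lam <= 1).
  { rewrite Hlam. unfold Rdiv.
    assert (Hinv : 0 < / (rj - ri)) by (apply Rinv_0_lt_compat; lra).
    split; [nra |].
    replace 1 with ((rj - ri) * / (rj - ri)) by (field; lra). nra. }
  (* the center of the homothety of ratio rj/ri mapping Di onto Dj *)
  set (k := ri / (ri - rj)).
  set (d := (fst ci + k * (fst cj - fst ci), snd ci + k * (snd cj - snd ci))).
  assert (Hdi : norm (psub d ci) = lam * ri).
  { apply norm_psub_eq_iff; [nra |].
    replace (dist2 d ci) with (k ^ 2 * dist2 ci cj)
      by (unfold d, dist2; cbn [fst snd]; ring).
    rewrite Hdl2, Hlam. unfold k. field. lra. }
  exists d. split.
  - right. split; [assumption |]. split; [exact Hdi |].
    apply norm_psub_eq_iff; [nra |].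
    replace (dist2 d cj) with ((k - 1) ^ 2 * dist2 ci cj)
      by (unfold d, dist2; cbn [fst snd]; ring).
    rewrite Hdl2, Hlam. unfold k. field. lra.
  - unfold in_disk; cbn [center radius]. rewrite Hdi. nra.
Qed.

Lemma exists_dij_in_inner_disk (Di Dj : disk) :
  0 <= radius Di -> Di <> Dj -> (forall y, in_disk y Di -> in_disk y Dj) ->
  exists d, is_dij Di Dj d /\ in_disk d Di.
Proof.
  intros Hri Hne Hsub.
  destruct (classic (boundaries_meet Di Dj)) as [Hm | Hm].
  - destruct (exists_dij_of_boundaries_meet Di Dj Hm) as [d [Hd Hdi]].
    exists d. split; [| apply in_disk_of_on_circle]; assumption.
  - apply exists_dij_of_nested; assumption.
Qed.

Definition circle_power (x : pt) (Dk : disk) : R := dist2 x (center Dk) - radius Dk ^ 2.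

Lemma in_disk_iff_power x Dk : 0 <= radius Dk -> in_disk x Dk <-> circle_power x Dk <= 0.
Proof.
  intros Hr. unfold in_disk, circle_power. rewrite norm_psub_le_iff by assumption. lra.
Qed.

Lemma on_circle_iff_power x Dk :
  0 <= radius Dk -> on_circle x (center Dk) (radius Dk) <-> circle_power x Dk = 0.
Proof.
  intros Hr. unfold on_circle, circle_power. rewrite norm_psub_eq_iff by assumption. lra.
Qed.

Section DiskFamily.

Variable D : nat -> disk.
Variable m : nat.
Hypothesis radius_ge0 : forall k, (k < m)%nat -> 0 <= radius (D k).

Definition in_all_disks (x : pt) : Prop := forall k, (k < m)%nat -> in_disk x (D k).

Lemma common_point_on_some_circle x :
  (0 < m)%nat -> in_all_disks x ->
  exists k p, (k < m)%nat /\ in_all_disks p /\ on_circle p (center (D k)) (radius (D k)).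
Proof.
  intros Hm Hx.
  set (F := fun l t => - circle_power (fst x + t, snd x) (D l)).
  set (T := Rabs (fst x - fst (center (D 0))) + radius (D 0) + 1).
  destruct (finite_family_touches_zero F m 0 T) as [s [Hall [k [Hk Hs]]]].
  - intros l. unfold F, circle_power, dist2; cbn [fst snd]. reg.
  - intros l Hl. unfold F. rewrite Rplus_0_r, <- surjective_pairing.
    apply Ropp_0_ge_le_contravar, Rle_ge, in_disk_iff_power, Hx; auto.
  - exists 0%nat. split; [assumption |].
    unfold F, circle_power, dist2, T; cbn [fst snd].
    pose proof (radius_ge0 0 Hm). pose proof (pow2_ge_0 (snd x - snd (center (D 0)))).
    assert (fst x + (Rabs (fst x - fst (center (D 0))) + radius (D 0) + 1) - fst (center (D 0))
            >= radius (D 0) + 1) by (unfold Rabs; destruct Rcase_abs; lra).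
    nra.
  - exists k, (fst x + s, snd x). repeat split; [assumption | |].
    + intros l Hl. apply in_disk_iff_power; [auto |]. specialize (Hall l Hl). unfold F in Hall. lra.
    + apply on_circle_iff_power; [auto |]. unfold F in Hs. lra.
Qed.

Lemma inner_disk_or_corner k p :
  (k < m)%nat -> in_all_disks p -> on_circle p (center (D k)) (radius (D k)) ->
  (forall l, (l < m)%nat -> forall y, in_disk y (D k) -> in_disk y (D l)) \/
  exists l v, (l < m)%nat /\ l <> k /\ in_all_disks v /\
    on_circle v (center (D k)) (radius (D k)) /\ on_circle v (center (D l)) (radius (D l)).
Proof.
  intros Hk Hp Hpk.
  set (ck := center (D k)) in *. set (rk := radius (D k)) in *.
  (* F l s >= 0 says that the point of angle s on the boundary of D_k lies in
     D_l; the constant 1 takes D_k itself out of the family. *)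
  set (F := fun l s =>
    if Nat.eq_dec l k then 1 else - circle_power (circle_pt ck rk s) (D l)).
  assert (HF : forall l s, (l < m)%nat -> 0 <= F l s -> in_disk (circle_pt ck rk s) (D l)).
  { intros l s Hl. unfold F. destruct (Nat.eq_dec l k) as [-> | _]; intros H.
    - apply in_disk_of_on_circle, circle_pt_on_circle, radius_ge0, Hk.
    - apply in_disk_iff_power; [auto | lra]. }
  destruct (on_circle_circle_pt _ _ _ Hpk) as [tp Htp].
  destruct (classic (exists l s, (l < m)%nat /\ F l s < 0)) as [[l [s Hneg]] | Hnone].
  - right.
    destruct (finite_family_touches_zero F m tp s) as [s' [Hall [l' [Hl' Hz]]]].
    + intros l0. unfold F. destruct (Nat.eq_dec l0 k).
      * apply continuity_const. intros ? ?; reflexivity.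
      * unfold circle_power, dist2, circle_pt; cbn [fst snd]. reg.
    + intros l0 Hl0. unfold F. destruct (Nat.eq_dec l0 k); [lra |].
      rewrite <- Htp. apply Ropp_0_ge_le_contravar, Rle_ge, in_disk_iff_power, Hp; auto.
    + exists l. exact Hneg.
    + assert (Hl'k : l' <> k)
        by (intros ->; unfold F in Hz; destruct (Nat.eq_dec k k); [lra | congruence]).
      exists l', (circle_pt ck rk s'). repeat split; try assumption.
      * intros l0 Hl0. apply HF, Hall; assumption.
      * apply circle_pt_on_circle, radius_ge0, Hk.
      * apply on_circle_iff_power; [auto |]. unfold F in Hz.
        destruct (Nat.eq_dec l' k); [contradiction | lra].
  - left. intros l Hl.
    apply disk_sub_of_circle_sub; [apply radius_ge0, Hk |].
    intros y Hy. destruct (on_circle_circle_pt _ _ _ Hy) as [s ->].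
    apply HF; [assumption |]. apply Rnot_lt_le. intros Hc. apply Hnone. eauto.
Qed.

End DiskFamily.

Theorem lemma4p1 (m : nat) (D : nat -> disk) :
  (2 <= m)%nat ->
  (forall k, (k < m)%nat -> 0 < radius (D k)) ->
  (forall i j, (i < m)%nat -> (j < m)%nat -> i <> j -> D i <> D j) ->
  ((exists x, forall k, (k < m)%nat -> in_disk x (D k)) <->
   exists i j, (i < m)%nat /\ (j < m)%nat /\ i <> j /\
     (exists x, in_disk x (D i) /\ in_disk x (D j)) /\
     exists d, is_dij (D i) (D j) d /\ forall k, (k < m)%nat -> in_disk d (D k)).
Proof.
  intros Hm Hr Hdistinct. split.
  2: { intros (i & j & _ & _ & _ & _ & d & _ & Hd). exists d. exact Hd. }
  intros [x Hx].
  assert (Hr0 : forall k, (k < m)%nat -> 0 <= radius (D k)) by (intros; apply Rlt_le, Hr; assumption).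
  destruct (common_point_on_some_circle D m Hr0 x ltac:(lia) Hx) as (k & p & Hk & Hp & Hpk).
  destruct (inner_disk_or_corner D m Hr0 k p Hk Hp Hpk)
    as [Hinner | (l & v & Hl & Hlk & Hv & Hvk & Hvl)].
  - set (j := if Nat.eq_dec k 0 then 1%nat else 0%nat).
    assert (Hj : (j < m)%nat /\ k <> j) by (unfold j; destruct (Nat.eq_dec k 0); lia).
    destruct (exists_dij_in_inner_disk (D k) (D j)) as (d & Hdij & Hdk);
      [apply Hr0, Hk | apply Hdistinct; tauto | apply Hinner; tauto |].
    exists k, j. repeat split; try tauto.
    + exists x. split; apply Hx; tauto.
    + exists d. split; [exact Hdij |]. intros l Hl. apply (Hinner l Hl), Hdk.
  - destruct (is_dij_of_on_circles _ _ _ Hvk Hvl); [exists k, l | exists l, k];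
      repeat split; auto; exists v; split; auto.
Qed.
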